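(* Let $G$ be a finite group generated by reflections of a real Euclidean space $V$ with root system $R$, and $\mathcal M_G\subset V\otimes\mathbb C$ the complement of the complexified reflection hyperplanes. Let $\sigma\in G$ be a special involution, with $V_1,V_2,R_1,R_2,G_1,G_2$ as in the context. Then every connected component of the fixed set $F_{\bar\sigma}=\{z\in\mathcal M_G:\sigma(\bar z)=z\}$ is contractible, and the number of connected components is $|G_1|\,|G_2|$.
   Context: For an involution $\sigma\in G$ (including the identity), let $V_1=\{v:\sigma v=-v\}$ and $V_2=\{v:\sigma v=v\}$, $R_i=R\cap V_i$, and $G_i$ the subgroup of $G$ generated by the reflections in the roots of $R_i$ ($i=1,2$). The involution $\sigma$ is called special if for every root $a\in R$ at least one of the orthogonal projections of $a$ onto $V_1$ and onto $V_2$ is proportional to a root from $R_1$ or $R_2$. *)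

From HB Require Import structures.
From mathcomp Require Import all_boot all_order all_algebra.
From mathcomp Require Import all_classical all_reals all_analysis.
Set Implicit Arguments. Unset Strict Implicit. Unset Printing Implicit Defensive.
Import Order.TTheory GRing.Theory Num.Theory.
Import numFieldNormedType.Exports.
Local Open Scope classical_set_scope.
Local Open Scope ring_scope.

Section Defs.
Variables (R : realType) (n : nat).

(* The Euclidean space V = R^n, realised as row vectors 'rV[R]_n with the
   standard inner product; linear maps act on the right: v |-> v *m g. *)
Definition dotv (u v : 'rV[R]_n) : R := (u *m v^T) 0 0.

Definition refl_mx (a : 'rV[R]_n) : 'M[R]_n :=
  1%:M - (2 / dotv a a) *: (a^T *m a).

Definition is_mxgroup (S : set 'M[R]_n) : Prop :=
  [/\ S 1%:M, (forall x y, S x -> S y -> S (x *m y))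
    & (forall x, S x -> S (invmx x))].

Definition gen_group (S : set 'M[R]_n) : set 'M[R]_n :=
  \bigcap_(H in [set H | is_mxgroup H /\ S `<=` H]) H.

Definition root_system (Rt : set 'rV[R]_n) : Prop :=
  [/\ finite_set Rt,
      (forall a, Rt a -> a != 0),
      (forall a c, Rt a -> (Rt (c *: a) <-> (c = 1 \/ c = -1)))
    & (forall a b, Rt a -> Rt b -> Rt (b *m refl_mx a))].

Definition is_orth_proj (W : set 'rV[R]_n) (a p : 'rV[R]_n) : Prop :=
  W p /\ forall w, W w -> dotv (a - p) w = 0.

Definition minus_eigsp (s : 'M[R]_n) : set 'rV[R]_n := [set v | v *m s = - v].
Definition plus_eigsp (s : 'M[R]_n) : set 'rV[R]_n := [set v | v *m s = v].

Definition proportional_to_root (S : set 'rV[R]_n) (p : 'rV[R]_n) : Prop :=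
  exists c b, S b /\ p = c *: b.

Definition special_involution (Rt : set 'rV[R]_n) (G : set 'M[R]_n)
    (s : 'M[R]_n) : Prop :=
  [/\ G s, s *m s = 1%:M &
    let R1 := Rt `&` minus_eigsp s in
    let R2 := Rt `&` plus_eigsp s in
    forall a, Rt a ->
      (exists p, is_orth_proj (minus_eigsp s) a p /\
                 proportional_to_root (R1 `|` R2) p) \/
      (exists p, is_orth_proj (plus_eigsp s) a p /\
                 proportional_to_root (R1 `|` R2) p)].

(* V (x) C is realised as V * V : z = x + i y  <->  (x, y).
   The complexified hyperplane of a is { z | <a, z> = 0 }, i.e. <a,x> = <a,y> = 0. *)
Definition complement_arrangement (Rt : set 'rV[R]_n)
  : set ('rV[R]_n * 'rV[R]_n) :=
  [set z | forall a, Rt a -> ~ (dotv a z.1 = 0 /\ dotv a z.2 = 0)].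

(* F_{sigma bar} = { z in M_G | sigma (conj z) = z }; conj (x,y) = (x,-y) and
   sigma acts C-linearly: sigma (x, y) = (x sigma, y sigma). *)
Definition fixed_set (Rt : set 'rV[R]_n) (s : 'M[R]_n)
  : set ('rV[R]_n * 'rV[R]_n) :=
  complement_arrangement Rt `&`
  [set z | (z.1 *m s, - (z.2 *m s)) = z].

End Defs.
Arguments refl_mx {R n}.

Definition contractible (R : realType) {T : topologicalType} (C : set T) : Prop :=
  C !=set0 /\
  exists (x0 : T) (H : R * T -> T),
    [/\ {within [set p : R * T | 0 <= p.1 <= 1 /\ C p.2], continuous H},
        (forall x, C x -> H (0, x) = x /\ H (1, x) = x0)
      & (forall t x, 0 <= t <= 1 -> C x -> C (H (t, x)))].

Definition components {T : topologicalType} (A : set T) : set (set T) :=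
  [set C | exists2 z, A z & C = connected_component A z].

From HB Require Import structures.
From mathcomp Require Import all_boot all_order all_algebra.
From mathcomp Require Import all_classical all_reals all_analysis.
From mathcomp Require Import lra.
Import Order.TTheory GRing.Theory Num.Theory.
Import numFieldNormedType.Exports.
Local Open Scope classical_set_scope.
Local Open Scope ring_scope.
Set Implicit Arguments. Unset Strict Implicit. Unset Printing Implicit Defensive.

(* Writing z = x + i y, the condition sigma (conj z) = z says that x lies in V2
   and y in V1.  Specialness makes the hyperplane conditions decouple: z avoids
   every complexified root hyperplane iff x is regular for R2 in V2 and y is
   regular for R1 in V1 (for a root orthogonal to both x and y, the projection
   onto V1 or V2 that is proportional to a root is forced to vanish, which puts
   the root itself in R2 or R1).  So F is a product of two hyperplane
   complements, and its components are products of chambers: convex, hence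
   contractible, and open and closed in F because finitely many sign
   conditions cut them out.  Finally G_i acts simply transitively on the
   chambers of R_i in V_i -- transitively by maximizing <x w, lam> over w, and
   freely by writing w as a word in simple reflections and using the deletion
   condition -- so the components are counted by |G1| |G2|. *)

Lemma mulr_gt0_eq_sign (R : realType) (p q : R) : p != 0 -> q != 0 ->
  (0 < p * q) = ((0 < p) == (0 < q)).
Proof.
move=> p0 q0; case: (ltgtP p 0) p0 => // [p_lt0|p_gt0] _.
  by rewrite nmulr_rgt0 //; case: ltgtP q0.
by rewrite pmulr_rgt0.
Qed.

Lemma mulr_ge0_eq_sign (R : realType) (p q : R) : p != 0 -> q != 0 ->
  (0 <= p * q) = ((0 < p) == (0 < q)).
Proof. by move=> p0 q0; rewrite le0r mulf_eq0 (negPf p0) (negPf q0) mulr_gt0_eq_sign. Qed.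

Lemma convex_comb_sign (R : realType) (t p q : R) : 0 <= t <= 1 ->
  p != 0 -> q != 0 -> (0 < p) = (0 < q) ->
  (1 - t) * p + t * q != 0 /\ (0 < (1 - t) * p + t * q) = (0 < p).
Proof.
move=> /andP[t0 t1] p0 q0; case: (ltgtP p 0) p0 => // [p_lt0|p_gt0] _ pq.
  have q_lt0 : q < 0 by rewrite lt_neqAle q0 leNgt -pq.
  have c_lt0 : (1 - t) * p + t * q < 0 by nra.
  by rewrite lt_eqF // lt_gtF.
have q_gt0 : 0 < q by rewrite -pq.
have c_gt0 : 0 < (1 - t) * p + t * q by nra.
by rewrite gt_eqF // c_gt0.
Qed.

Lemma seq_argmax (R : realType) (T : eqType) (f : T -> R) (y : T) (s : seq T) :
  exists2 a, a \in y :: s & forall b, b \in y :: s -> f b <= f a.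
Proof.
elim: s y => [|z s IH] y; first by exists y => [|b]; rewrite ?inE // => /eqP->.
have [a za fa] := IH z.
have [ya|ay] := leP (f y) (f a).
  exists a; first by rewrite inE za orbT.
  by move=> b; rewrite inE => /predU1P[->//|/fa].
exists y; first exact: mem_head.
by move=> b; rewrite inE => /predU1P[->//|/fa/le_trans]; apply; apply: ltW.
Qed.

Lemma finite_argmax (R : realType) (T : eqType) (A : set T) (f : T -> R) :
  finite_set A -> A !=set0 -> exists2 a, A a & forall b, A b -> f b <= f a.
Proof.
move=> /finite_seqP[s ->] [x]; case: s => [//|y s] _.
by have [a ? ?] := seq_argmax f y s; exists a.
Qed.

Lemma exists_notin (R : realType) (s : seq R) : exists t, t \notin s.
Proof.
exists (1 + \sum_(x <- s) `|x|); set t := 1 + _.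
have sum_ge0 : 0 <= \sum_(x <- s) `|x| by apply: sumr_ge0 => x _.
apply/negP => ts; have : `|t| <= \sum_(x <- s) `|x|.
  by rewrite (big_rem t ts) /= lerDl sumr_ge0.
rewrite ger0_norm /t ?addr_ge0 //; lra.
Qed.

Section InnerProduct.
Variables (R : realType) (n : nat).
Implicit Types (u v w : 'rV[R]_n) (g : 'M[R]_n).

Lemma dotvE u v : dotv u v = \sum_i u 0 i * v 0 i.
Proof. by rewrite /dotv mxE; apply: eq_bigr => i _; rewrite mxE. Qed.

Lemma dotvC u v : dotv u v = dotv v u.
Proof. by rewrite !dotvE; apply: eq_bigr => i _; rewrite mulrC. Qed.

Lemma dotvDl u v w : dotv (u + v) w = dotv u w + dotv v w.
Proof. by rewrite /dotv mulmxDl mxE. Qed.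

Lemma dotvZl c u w : dotv (c *: u) w = c * dotv u w.
Proof. by rewrite /dotv -scalemxAl mxE. Qed.

Lemma dotvNl u w : dotv (- u) w = - dotv u w.
Proof. by rewrite -scaleN1r dotvZl mulN1r. Qed.

Lemma dotvBl u v w : dotv (u - v) w = dotv u w - dotv v w.
Proof. by rewrite dotvDl dotvNl. Qed.

Lemma dotv0l w : dotv 0 w = 0.
Proof. by rewrite /dotv mul0mx mxE. Qed.

Lemma dotvDr u v w : dotv w (u + v) = dotv w u + dotv w v.
Proof. by rewrite dotvC dotvDl !(dotvC w). Qed.

Lemma dotvZr c u w : dotv w (c *: u) = c * dotv w u.
Proof. by rewrite dotvC dotvZl dotvC. Qed.

Lemma dotvNr u w : dotv w (- u) = - dotv w u.
Proof. by rewrite dotvC dotvNl dotvC. Qed.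

Lemma dotv_suml (I : Type) (r : seq I) (c : I -> R) (f : I -> 'rV[R]_n) v :
  dotv (\sum_(i <- r) c i *: f i) v = \sum_(i <- r) c i * dotv (f i) v.
Proof.
elim: r => [|i r IH]; first by rewrite !big_nil dotv0l.
by rewrite !big_cons dotvDl dotvZl IH.
Qed.

Lemma dotvv_gt0 u : u != 0 -> 0 < dotv u u.
Proof.
move=> u0; have sq_ge0 i : 0 <= u 0 i * u 0 i by rewrite -expr2 sqr_ge0.
rewrite lt_def dotvE sumr_ge0 ?andbT //; apply: contra u0.
rewrite psumr_eq0 // => /allP u_eq0; apply/eqP/rowP => i; rewrite !mxE.
have /implyP/(_ isT) := u_eq0 i (mem_index_enum _).
by rewrite mulf_eq0 orbb => /eqP.
Qed.

Lemma dotvv_eq0 u : (dotv u u == 0) = (u == 0).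
Proof.
apply/idP/idP => [|/eqP->]; last by rewrite dotv0l.
by apply: contraLR => /dotvv_gt0 /lt0r_neq0.
Qed.

Lemma dotv_mulmxl u v g : dotv (u *m g) v = dotv u (v *m g^T).
Proof. by rewrite /dotv trmx_mul trmxK mulmxA. Qed.

Lemma dotv_mulmxr u v g : dotv u (v *m g) = dotv (u *m g^T) v.
Proof. by rewrite dotvC dotv_mulmxl dotvC. Qed.

End InnerProduct.

Section Orthogonal.
Variables (R : realType) (n : nat).
Implicit Types (u v : 'rV[R]_n) (g h : 'M[R]_n).

Definition orthogonal_mx g := g *m g^T = 1%:M.

Lemma mulmx_ext g h : (forall v : 'rV[R]_n, v *m g = v *m h) -> g = h.
Proof. by move=> gh; apply/row_matrixP => i; rewrite !rowE gh. Qed.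

Lemma orthogonal_mxC g : orthogonal_mx g -> g^T *m g = 1%:M.
Proof. exact: mulmx1C. Qed.

Lemma invmx_orthogonal g : orthogonal_mx g -> invmx g = g^T.
Proof.
move=> og; have [gu _] := mulmx1_unit og.
by rewrite -[invmx g]mulmx1 -og mulmxA mulVmx // mul1mx.
Qed.

Lemma orthogonal_mx1 : orthogonal_mx 1%:M.
Proof. by rewrite /orthogonal_mx trmx1 mulmx1. Qed.

Lemma orthogonal_mxT g : orthogonal_mx g -> orthogonal_mx g^T.
Proof. by move=> og; rewrite /orthogonal_mx trmxK orthogonal_mxC. Qed.

Lemma orthogonal_mxM g h :
  orthogonal_mx g -> orthogonal_mx h -> orthogonal_mx (g *m h).
Proof.
by move=> og oh; rewrite /orthogonal_mx trmx_mul mulmxA -(mulmxA g) oh mulmx1 og.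
Qed.

Lemma dotv_orthogonal g u v :
  orthogonal_mx g -> dotv (u *m g) (v *m g) = dotv u v.
Proof. by move=> og; rewrite dotv_mulmxl -mulmxA og mulmx1. Qed.

End Orthogonal.

Section Reflection.
Variables (R : realType) (n : nat).
Implicit Types (a v : 'rV[R]_n) (g : 'M[R]_n).

Lemma refl_mxE v a : v *m refl_mx a = v - (2 / dotv a a * dotv v a) *: a.
Proof.
rewrite /refl_mx mulmxBr mulmx1 -scalemxAr mulmxA [v *m a^T]mx11_scalar.
by rewrite mul_scalar_mx scalerA.
Qed.

Lemma trmx_refl a : (refl_mx a)^T = refl_mx a.
Proof. by rewrite /refl_mx linearB /= linearZ /= trmx1 trmx_mul trmxK. Qed.

Lemma refl_mxN a : refl_mx (- a) = refl_mx a.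
Proof.
apply: mulmx_ext => v; rewrite !refl_mxE !dotvNl !dotvNr opprK.
by rewrite scalerN mulrN scaleNr opprK.
Qed.

Lemma refl_mx_root a : a != 0 -> a *m refl_mx a = - a.
Proof.
move=> a0; rewrite refl_mxE divfK ?dotvv_eq0 //.
by rewrite scaler_nat mulr2n opprD addrA subrr add0r.
Qed.

Lemma dotv_refl v a : a != 0 -> dotv (v *m refl_mx a) a = - dotv v a.
Proof.
by move=> a0; rewrite dotv_mulmxl trmx_refl refl_mx_root // dotvNr.
Qed.

Lemma refl_mxK a : a != 0 -> refl_mx a *m refl_mx a = 1%:M.
Proof.
move=> a0; apply: mulmx_ext => v; rewrite mulmx1 mulmxA.
rewrite (refl_mxE (v *m refl_mx a)) dotv_refl // refl_mxE.
by rewrite mulrN scaleNr opprK subrK.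
Qed.

Lemma refl_mx_orthogonal a : a != 0 -> orthogonal_mx (refl_mx a).
Proof. by move=> a0; rewrite /orthogonal_mx trmx_refl refl_mxK. Qed.

Lemma refl_mx_conj a g : a != 0 -> orthogonal_mx g ->
  refl_mx (a *m g) = g^T *m refl_mx a *m g.
Proof.
move=> a0 og; apply: mulmx_ext => v; rewrite refl_mxE !mulmxA refl_mxE.
rewrite mulmxBl -scalemxAl -mulmxA (orthogonal_mxC og) mulmx1 dotv_orthogonal //.
by rewrite dotv_mulmxl trmxK.
Qed.

End Reflection.

Section GeneratedGroup.
Variables (R : realType) (n : nat).
Implicit Types (S K : set 'M[R]_n).

Lemma gen_group_min S K : is_mxgroup K -> S `<=` K -> gen_group S `<=` K.
Proof. by move=> gK SK x; apply; split. Qed.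

Lemma sub_gen_group S : S `<=` gen_group S.
Proof. by move=> x Sx H [_]; apply. Qed.

Lemma gen_group_is_group S : is_mxgroup (gen_group S).
Proof.
split=> [H [[]] //|x y Sx Sy H HS|x Sx H HS]; have [[_ HM HV] _] := HS.
  by apply: HM; [apply: Sx | apply: Sy].
by apply: HV; apply: Sx.
Qed.

Lemma gen_group1 S : gen_group S 1%:M.
Proof. by case: (gen_group_is_group S). Qed.

Lemma gen_groupM S x y : gen_group S x -> gen_group S y -> gen_group S (x *m y).
Proof. by case: (gen_group_is_group S) => _ M _; apply: M. Qed.

Lemma gen_groupV S x : gen_group S x -> gen_group S (invmx x).
Proof. by case: (gen_group_is_group S) => _ _ V; apply: V. Qed.

Lemma gen_groupS (S1 S2 : set 'M[R]_n) : S1 `<=` S2 -> gen_group S1 `<=` gen_group S2.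
Proof.
move=> S12; apply: gen_group_min (gen_group_is_group _) _ => x /S12.
exact: sub_gen_group.
Qed.

End GeneratedGroup.

Section Subspaces.
Variables (R : realType) (n : nat).
Implicit Types (E S : set 'rV[R]_n) (a x : 'rV[R]_n) (g : 'M[R]_n).

Definition is_subspace E := E 0 /\ forall u v c, E u -> E v -> E (u + c *: v).

Definition regular S x := forall a, S a -> dotv a x != 0.

Definition same_chamber S x y := forall a, S a -> (0 < dotv a x) = (0 < dotv a y).

Definition mx_invariant E g := forall x, E x -> E (x *m g) /\ E (x *m g^T).

Definition orth_stabilizer E := [set g | orthogonal_mx g /\ mx_invariant E g].

Lemma subspaceZ E c x : is_subspace E -> E x -> E (c *: x).
Proof. by move=> [E0 ElC] Ex; rewrite -[_ *: _]add0r; apply: ElC. Qed.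

Lemma subspace_comb E c d u v : is_subspace E -> E u -> E v -> E (c *: u + d *: v).
Proof.
by move=> sE Eu Ev; case: (sE) => _ ElC; apply: ElC => //; apply: subspaceZ.
Qed.

Lemma subspace_refl E a x : is_subspace E -> E a -> E x -> E (x *m refl_mx a).
Proof. by move=> [_ ElC] Ea Ex; rewrite refl_mxE -scaleNr; apply: ElC. Qed.

Lemma orth_stabilizer_group E : is_mxgroup (orth_stabilizer E).
Proof.
split.
- by split=> [|x Ex]; [exact: orthogonal_mx1 | rewrite trmx1 mulmx1].
- move=> g h [og Eg] [oh Eh]; split=> [|x Ex]; first exact: orthogonal_mxM.
  rewrite trmx_mul !mulmxA; split; first exact: (Eh _ (Eg _ Ex).1).1.
  exact: (Eg _ (Eh _ Ex).2).2.
- move=> g [og Eg]; rewrite invmx_orthogonal //; split; first exact: orthogonal_mxT.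
  by move=> x /Eg[]; rewrite trmxK.
Qed.

Lemma refl_orth_stabilizer E a : a != 0 ->
  (forall x, E x -> E (x *m refl_mx a)) -> orth_stabilizer E (refl_mx a).
Proof. by move=> a0 Ea; split=> [|x /Ea]; [exact: refl_mx_orthogonal | rewrite trmx_refl]. Qed.

Lemma gen_group_orth_stabilizer E S :
  (forall a, S a -> orth_stabilizer E (refl_mx a)) ->
  gen_group (refl_mx @` S) `<=` orth_stabilizer E.
Proof.
by move=> SE; apply: gen_group_min (orth_stabilizer_group E) _ => _ [a /SE ? <-].
Qed.

Lemma root_systemI S E : root_system S -> is_subspace E -> root_system (S `&` E).
Proof.
move=> [Sfin S0 Sred Srefl] sE; split.
- exact: finite_setIl.
- by move=> a [/S0].
- move=> a c [Sa Ea]; split=> [[/(Sred _ _ Sa) //]|cpm].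
  by split; [apply/(Sred _ _ Sa) | apply: subspaceZ].
- by move=> a b [Sa Ea] [Sb Eb]; split; [apply: Srefl | apply: subspace_refl].
Qed.

End Subspaces.

Fixpoint refl_word (R : realType) (n : nat) (ws : seq 'rV[R]_n) : 'M[R]_n :=
  if ws is a :: ws' then refl_mx a *m refl_word ws' else 1%:M.

Section ReflectionWords.
Variables (R : realType) (n : nat).
Implicit Types (s t ws : seq 'rV[R]_n).

Lemma refl_word_cat s t : refl_word (s ++ t) = refl_word s *m refl_word t.
Proof. by elim: s => [|a s IH] /=; rewrite ?mul1mx // IH mulmxA. Qed.

Lemma trmx_refl_word ws : (refl_word ws)^T = refl_word (rev ws).
Proof.
elim: ws => [|a s IH] /=; first by rewrite trmx1.
by rewrite trmx_mul IH trmx_refl rev_cons -cats1 refl_word_cat /= mulmx1.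
Qed.

Lemma refl_word_orthogonal ws : all (predC1 0) ws -> orthogonal_mx (refl_word ws).
Proof.
elim: ws => [|a s IH] /=; first by move=> _; apply: orthogonal_mx1.
by move=> /andP[a0 s0]; apply: orthogonal_mxM; [apply: refl_mx_orthogonal | apply: IH].
Qed.

End ReflectionWords.

Section Regular.
Variables (R : realType) (n : nat).

Lemma exists_regular (S E : set 'rV[R]_n) : finite_set S -> (forall a, S a -> a != 0) ->
  S `<=` E -> is_subspace E -> exists2 x, E x & regular S x.
Proof.
move=> /finite_seqP[s ->] + + [E0 ElC]; elim: s => [|a s IH] S0 SE; first by exists 0.
have [x Ex xreg] : exists2 x, E x & regular [set` s] x.
  by apply: IH => b bs; [apply: S0 | apply: SE]; rewrite /= inE bs orbT.
have a0 : a != 0 by apply: S0; apply: mem_head.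
(* The parameters [t] at which [x + t a] meets a hyperplane; when
   [dotv b a = 0] the entry is a junk value and no [t] is bad for [b]. *)
have [t tbad] := exists_notin [seq - dotv b x / dotv b a | b <- a :: s].
exists (x + t *: a); first by apply: ElC => //; apply: SE; apply: mem_head.
move=> b bas; rewrite dotvDr dotvZr.
have [ba0|ba_neq0] := eqVneq (dotv b a) 0.
  move: bas ba0; rewrite /= inE => /predU1P[-> /eqP|bs ->].
    by rewrite dotvv_eq0 (negPf a0).
  by rewrite mulr0 addr0 xreg.
apply: contraNneq tbad => bt; apply/mapP; exists b => //.
apply: (mulIf ba_neq0); rewrite divfK //.
by move/eqP: bt; rewrite addr_eq0 => /eqP->; rewrite opprK.
Qed.

End Regular.

Section Cones.
Variables (R : realType) (n : nat).
Implicit Types (D : seq 'rV[R]_n) (d v : 'rV[R]_n).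

Definition in_cone D v :=
  exists2 c : 'rV[R]_n -> R, (forall x, 0 <= c x) & v = \sum_(d <- D) c d *: d.

Lemma in_cone_mem D v : uniq D -> v \in D -> in_cone D v.
Proof.
move=> uD vD; exists (fun x => (x == v)%:R) => [x|]; first by rewrite ler0n.
rewrite (big_rem v vD) /= eqxx scale1r big1_seq ?addr0 // => x /andP[_].
by rewrite mem_rem_uniq // inE => /andP[/negPf-> _]; rewrite scale0r.
Qed.

Lemma in_cone_rem D d v : d \in D -> in_cone (rem d D) d -> in_cone D v ->
  in_cone (rem d D) v.
Proof.
move=> dD [e e_ge0 dE] [c c_ge0 vE].
exists (fun x => c d * e x + c x) => [x|]; first by rewrite addr_ge0 ?mulr_ge0.
rewrite vE (big_rem d dD) /=.
under [RHS]eq_bigr do rewrite scalerDl -scalerA.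
by rewrite big_split /= -scaler_sumr -dE.
Qed.

End Cones.

(** * Finite reflection groups act simply transitively on chambers *)

Section ReflectionGroup.
Variables (R : realType) (n : nat) (S : set 'rV[R]_n).
Hypothesis rootS : root_system S.
Implicit Types (a b x y : 'rV[R]_n) (w : 'M[R]_n).
Local Notation W := (gen_group (refl_mx @` S)).

Lemma root_neq0 a : S a -> a != 0.
Proof. by case: rootS => _ S0 _ _; apply: S0. Qed.

Lemma root_refl a b : S a -> S b -> S (b *m refl_mx a).
Proof. by case: rootS => _ _ _; apply. Qed.

Lemma root_scale a c : S a -> S (c *: a) -> c = 1 \/ c = -1.
Proof. by case: rootS => _ _ Sred _ Sa /(Sred _ _ Sa). Qed.

Lemma root_opp a : S a -> S (- a).
Proof. by move=> Sa; rewrite -refl_mx_root ?root_neq0 //; apply: root_refl. Qed.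

Lemma refl_group_orth_stabilizer : W `<=` orth_stabilizer S.
Proof.
apply: gen_group_orth_stabilizer => a Sa.
by apply: refl_orth_stabilizer (root_neq0 Sa) _ => x; apply: root_refl.
Qed.

Lemma refl_group_orthogonal w : W w -> orthogonal_mx w.
Proof. by move=> /refl_group_orth_stabilizer[]. Qed.

Lemma refl_group_root w a : W w -> S a -> S (a *m w) /\ S (a *m w^T).
Proof. by move=> /refl_group_orth_stabilizer[_ Sw] /Sw. Qed.

Lemma refl_group_subspace E w x :
  is_subspace E -> S `<=` E -> W w -> E x -> E (x *m w).
Proof.
move=> sE SE Ww Ex; suff [_ /(_ x Ex)[]] : orth_stabilizer E w by [].
apply: gen_group_orth_stabilizer Ww => a Sa.
by apply: refl_orth_stabilizer (root_neq0 Sa) _ => y; apply: subspace_refl (SE _ Sa).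
Qed.

Lemma refl_groupT w : W w -> W w^T.
Proof.
by move=> Ww; rewrite -invmx_orthogonal; [apply: gen_groupV | apply: refl_group_orthogonal].
Qed.

Lemma regular_mulmx w x : W w -> regular S x -> regular S (x *m w).
Proof.
by move=> Ww xreg a Sa; rewrite dotv_mulmxr; apply: xreg; apply: (refl_group_root Ww Sa).2.
Qed.

Lemma same_chamber_mulmx w x y :
  W w -> same_chamber S x y -> same_chamber S (x *m w) (y *m w).
Proof.
by move=> Ww xy a Sa; rewrite !dotv_mulmxr; apply: xy; apply: (refl_group_root Ww Sa).2.
Qed.

End ReflectionGroup.

Section Chambers.
Variables (R : realType) (n : nat) (S : set 'rV[R]_n) (lam : 'rV[R]_n).
Hypothesis rootS : root_system S.
Hypothesis lam_regular : regular S lam.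
Implicit Types (a b d g x : 'rV[R]_n) (w : 'M[R]_n) (D ws : seq 'rV[R]_n).
Local Notation W := (gen_group (refl_mx @` S)).

Lemma refl_group_to_chamber x : finite_set W -> regular S x ->
  exists2 w, W w & same_chamber S (x *m w) lam.
Proof.
(* A maximizer [w] of [<x w, lam>] cannot be improved by composing with
   [refl_mx a], which forces [<x w, a>] and [<a, lam>] to have the same sign. *)
move=> Wfin xreg; have W1 : W !=set0 by exists 1%:M; apply: gen_group1.
have [w Ww wmax] := finite_argmax (fun w => dotv (x *m w) lam) Wfin W1.
exists w => // a Sa.
have /wmax : W (w *m refl_mx a) by apply: gen_groupM Ww _; apply: sub_gen_group; exists a.
have k_gt0 : 0 < 2 / dotv a a by apply: divr_gt0 => //; apply/dotvv_gt0/(root_neq0 rootS).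
rewrite /= mulmxA refl_mxE dotvBl dotvZl gerBl -[2 / _ * _ * _]mulrA pmulr_rge0 //.
have xwa : dotv (x *m w) a != 0 by rewrite dotvC; apply: (regular_mulmx rootS).
by rewrite (mulr_ge0_eq_sign xwa (lam_regular Sa)) => /eqP; rewrite dotvC.
Qed.

Definition positive_root a := S a /\ 0 < dotv a lam.

Lemma positive_rootN a : S a -> ~ positive_root a -> positive_root (- a).
Proof.
move=> Sa Na; split; first exact: (root_opp rootS Sa).
rewrite dotvNl oppr_gt0 lt_neqAle lam_regular //= leNgt.
by apply/negP => ?; apply: Na.
Qed.

Definition positive_spanning D :=
  (forall d, d \in D -> positive_root d) /\
  (forall v, positive_root v -> in_cone D v).

(* Unlike Humphreys' simple systems, no linear independence is required. *)
Definition simple_system D :=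
  positive_spanning D /\ forall d, d \in D -> ~ in_cone (rem d D) d.

Lemma positive_spanning_rem D d : positive_spanning D -> d \in D ->
  in_cone (rem d D) d -> positive_spanning (rem d D).
Proof.
move=> [DP DC] dD dC; split=> [x /mem_rem/DP //|v /DC]; exact: in_cone_rem.
Qed.

Lemma exists_positive_spanning : exists D, positive_spanning D.
Proof.
have [Sfin _ _ _] := rootS; have [s Ss] := (finite_seqP S).1 Sfin.
exists (undup [seq a <- s | 0 < dotv a lam]); split.
  by move=> d; rewrite mem_undup mem_filter => /andP[dpos ds]; rewrite /positive_root Ss.
move=> v [Sv vpos]; apply: in_cone_mem; first exact: undup_uniq.
by move: Sv; rewrite Ss mem_undup mem_filter vpos.
Qed.

Lemma exists_simple_system : exists D, simple_system D.
Proof.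
have [D0 spanD0] := exists_positive_spanning.
have [k] := ubnP (size D0); elim: k D0 spanD0 => // k IH D spanD sizeD.
have [minD|] := pselect (forall d, d \in D -> ~ in_cone (rem d D) d).
  by exists D.
move=> /existsNP[d /not_implyP[dD /contrapT dC]].
have D_gt0 : (0 < size D)%N by rewrite -has_predT; apply/hasP; exists d.
apply: (IH (rem d D)); first exact: positive_spanning_rem spanD dD dC.
by rewrite size_rem // -ltnS prednK.
Qed.

Section SimpleSystem.
Variable D : seq 'rV[R]_n.
Hypothesis simpleD : simple_system D.

Lemma simple_positive d : d \in D -> positive_root d.
Proof. by case: simpleD => -[DP _] _; apply: DP. Qed.

Lemma positive_in_cone v : positive_root v -> in_cone D v.
Proof. by case: simpleD => -[_ DC] _; apply: DC. Qed.

Lemma simple_words_orthogonal ws : all (mem D) ws -> orthogonal_mx (refl_word ws).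
Proof.
move=> wsD; apply: refl_word_orthogonal; apply: sub_all wsD => d /simple_positive[Sd _].
exact: (root_neq0 rootS).
Qed.

Lemma simple_cone_coef_eq0 d f : d \in D -> (forall x, 0 <= f x) ->
  d = \sum_(x <- D) f x *: x -> forall x, x \in rem d D -> f x = 0.
Proof.
(* If [f d < 1], [d] is in the cone of the other simple roots; otherwise
   pairing with [lam] kills every other coefficient. *)
move=> dD f_ge0; rewrite (big_rem d dD) /= => dE.
have [fd_lt1|fd_ge1] := ltP (f d) 1.
  have rest : (1 - f d) *: d = \sum_(x <- rem d D) f x *: x.
    by rewrite scalerBl scale1r {1}dE addrAC subrr add0r.
  have [_ /(_ d dD) dmin] := simpleD; exfalso; apply: dmin.
  exists (fun x => f x / (1 - f d)).
    by move=> x; rewrite divr_ge0 // subr_ge0 ltW.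
  under eq_bigr do rewrite mulrC -scalerA.
  by rewrite -scaler_sumr -rest scalerA mulVf ?scale1r // subr_eq0 eq_sym lt_eqF.
have sum0 : (f d - 1) *: d + \sum_(x <- rem d D) f x *: x = 0.
  by rewrite scalerBl scale1r addrAC -dE subrr.
have := congr1 (fun v => dotv v lam) sum0; rewrite /= dotvDl dotvZl dotv_suml dotv0l big_seq.
move=> /eqP; rewrite paddr_eq0 ?mulr_ge0 ?subr_ge0 ?(ltW (simple_positive dD).2) //; last first.
  by apply: sumr_ge0 => x /mem_rem/simple_positive[_ /ltW]; apply: mulr_ge0.
rewrite psumr_eq0 => [/andP[_ /allP f0] x xD|x /mem_rem/simple_positive[_ /ltW]]; last first.
  exact: mulr_ge0.
have [_ xpos] := simple_positive (mem_rem xD).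
by move: (f0 x xD); rewrite xD mulf_eq0 (gt_eqF xpos) orbF => /eqP.
Qed.

Lemma simple_cone_multiple d b k : d \in D -> 0 < k ->
  in_cone D b -> in_cone D (k *: d - b) -> exists c, b = c *: d.
Proof.
move=> dD k_gt0 [c c_ge0 bE] [e e_ge0 kdbE].
have dE : d = \sum_(x <- D) ((c x + e x) / k) *: x.
  under eq_bigr do rewrite mulrC -scalerA scalerDl.
  by rewrite -scaler_sumr big_split /= -bE -kdbE addrC subrK scalerA mulVf ?scale1r ?gt_eqF.
have f_ge0 x : 0 <= (c x + e x) / k by rewrite divr_ge0 ?addr_ge0 // ltW.
have c_rest x : x \in rem d D -> c x = 0.
  move=> /(simple_cone_coef_eq0 dD f_ge0 dE) /eqP.
  by rewrite mulf_eq0 invr_eq0 (gt_eqF k_gt0) orbF paddr_eq0 // => /andP[/eqP].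
exists (c d); rewrite bE (big_rem d dD) /= big1_seq ?addr0 // => x /andP[_ /c_rest->].
by rewrite scale0r.
Qed.

Lemma simple_refl_positive d b : d \in D -> positive_root b -> b != d ->
  positive_root (b *m refl_mx d).
Proof.
move=> dD [Sb b_pos] bd; have [Sd d_pos] := simple_positive dD.
have Sbd : S (b *m refl_mx d) := root_refl rootS Sd Sb.
split => //; rewrite ltNge; apply/negP => bd_le0.
set k := 2 / dotv d d * dotv b d.
have bdE : b *m refl_mx d = b - k *: d by rewrite refl_mxE.
have kdb_pos : positive_root (k *: d - b).
  rewrite -opprB -bdE; apply: positive_rootN => // -[_].
  by rewrite ltNge bd_le0.
have k_gt0 : 0 < k.
  have : 0 < dotv (k *: d) lam.
    by rewrite -(subrK b (k *: d)) dotvDl addr_gt0 // kdb_pos.2.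
  by rewrite dotvZl pmulr_lgt0.
have [c bE] := simple_cone_multiple dD k_gt0
  (positive_in_cone (conj Sb b_pos)) (positive_in_cone kdb_pos).
have := Sb; rewrite bE => /(root_scale rootS Sd) [c1|c1].
  by move: bd; rewrite bE c1 scale1r eqxx.
by move: b_pos; rewrite bE c1 scaleN1r dotvNl oppr_gt0 ltNge (ltW d_pos).
Qed.

Lemma exists_simple_dotv_gt0 g : positive_root g ->
  exists2 x, x \in D & 0 < dotv x g.
Proof.
move=> gpos; have [c c_ge0 gE] := positive_in_cone gpos.
have [//|no_x] := pselect (exists2 x, x \in D & 0 < dotv x g).
suff : dotv g g <= 0 by rewrite leNgt dotvv_gt0 // (root_neq0 rootS gpos.1).
rewrite {1}gE dotv_suml big_seq; apply: sumr_le0 => x xD.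
by rewrite mulr_ge0_le0 // leNgt; apply/negP => x_gt0; apply: no_x; exists x.
Qed.

Lemma positive_root_conj_simple b : positive_root b ->
  exists2 ws, all (mem D) ws & b *m refl_word ws \in D.
Proof.
(* Among the positive roots reachable from [b], take one of least height
   [<g, lam>]; if it is not simple, some simple reflection lowers its height. *)
move=> bpos.
pose reach := [set g | positive_root g /\
  exists2 ws, all (mem D) ws & g = b *m refl_word ws].
have reach_fin : finite_set reach.
  by have [Sfin _ _ _] := rootS; apply: sub_finite_set Sfin => g [[]].
have reach_b : reach !=set0 by exists b; split => //; exists [::]; rewrite ?mulmx1.
have [g [gpos [ws wsD gE]] gmin] :=
  finite_argmax (fun g => - dotv g lam) reach_fin reach_b.
have [x xD xg_gt0] := exists_simple_dotv_gt0 gpos.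
have [gx|gx] := eqVneq g x; first by exists ws; rewrite // -gE gx.
have /gmin : reach (g *m refl_mx x).
  split; first exact: simple_refl_positive.
  exists (rcons ws x); first by rewrite all_rcons wsD andbT.
  by rewrite -cats1 refl_word_cat /= mulmx1 mulmxA gE.
have xpos := simple_positive xD.
have k_gt0 : 0 < 2 / dotv x x.
  by apply: divr_gt0 => //; apply/dotvv_gt0/(root_neq0 rootS xpos.1).
have : 0 < 2 / dotv x x * dotv g x * dotv x lam.
  by apply: mulr_gt0; [apply: mulr_gt0; rewrite // dotvC | exact: xpos.2].
rewrite /= refl_mxE dotvBl dotvZl; lra.
Qed.

Lemma refl_mx_positive_simple_word b : positive_root b ->
  exists2 ws, all (mem D) ws & refl_mx b = refl_word ws.
Proof.
move=> bpos; have [ws wsD bwsD] := positive_root_conj_simple bpos.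
have ows := simple_words_orthogonal wsD.
exists (ws ++ b *m refl_word ws :: rev ws); first by rewrite all_cat /= all_rev wsD bwsD.
rewrite refl_word_cat /= -trmx_refl_word (refl_mx_conj (root_neq0 rootS bpos.1) ows).
by rewrite !mulmxA ows mul1mx -!mulmxA ows mulmx1.
Qed.

Lemma refl_mx_simple_word b : S b ->
  exists2 ws, all (mem D) ws & refl_mx b = refl_word ws.
Proof.
move=> Sb; have [bpos|bneg] := pselect (positive_root b).
  exact: refl_mx_positive_simple_word.
by rewrite -refl_mxN; apply: refl_mx_positive_simple_word; apply: positive_rootN.
Qed.

Lemma refl_group_simple_word w : W w ->
  exists2 ws, all (mem D) ws & w = refl_word ws.
Proof.
pose words := [set w : 'M[R]_n | exists2 ws, all (mem D) ws & w = refl_word ws].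
move: w; apply: (gen_group_min (K := words)) => [|_ [b Sb <-]]; last first.
  exact: refl_mx_simple_word.
split.
- by exists [::].
- move=> _ _ [s sD ->] [t tD ->]; exists (s ++ t); first by rewrite all_cat sD.
  by rewrite refl_word_cat.
- move=> _ [s sD ->]; exists (rev s); first by rewrite all_rev.
  by rewrite invmx_orthogonal ?trmx_refl_word //; apply: simple_words_orthogonal.
Qed.

Lemma simple_word_deletion ws b : all (mem D) ws -> positive_root b ->
  ~ positive_root (b *m refl_word ws) ->
  exists p d q, ws = p ++ d :: q /\ b *m refl_word p = d.
Proof.
elim: ws b => [|a ws IH] b /=; first by move=> _ bpos; rewrite mulmx1 => /(_ bpos).
move=> /andP[aD wsD] bpos; have [->|ba] := eqVneq b a.
  by exists [::], a, ws; rewrite /= mulmx1.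
rewrite mulmxA => /(IH _ wsD (simple_refl_positive aD bpos ba))[p [d [q [-> pd]]]].
by exists (a :: p), d, q; rewrite /= mulmxA.
Qed.

Lemma refl_word_positive_eq1 ws : all (mem D) ws ->
  (forall b, positive_root b -> positive_root (b *m refl_word ws)) ->
  refl_word ws = 1%:M.
Proof.
have [k] := ubnP (size ws); elim: k ws => // k IH [|a ws] //= ws_lt.
move=> /andP[aD wsD] ws_pos; have [Sa _] := simple_positive aD.
have not_pos : ~ positive_root (a *m refl_word ws).
  have := ws_pos a (simple_positive aD).
  rewrite mulmxA refl_mx_root ?(root_neq0 rootS Sa) // mulNmx => -[_].
  by rewrite dotvNl oppr_gt0 => neg [_ /(lt_trans neg)]; rewrite ltxx.
have [p [d [q [wsE ad]]]] := simple_word_deletion wsD (simple_positive aD) not_pos.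
have /and3P[pD dD qD] : [&& all (mem D) p, d \in D & all (mem D) q].
  by move: wsD; rewrite wsE all_cat /= andbA.
have a_conj : refl_mx a *m refl_word p = refl_word p *m refl_mx d.
  rewrite -ad (refl_mx_conj (root_neq0 rootS Sa) (simple_words_orthogonal pD)).
  by rewrite !mulmxA (simple_words_orthogonal pD) mul1mx.
have wsE' : refl_mx a *m refl_word ws = refl_word (p ++ q).
  rewrite wsE !refl_word_cat /= mulmxA a_conj -mulmxA (mulmxA (refl_mx d)).
  by rewrite refl_mxK ?mul1mx // (root_neq0 rootS (simple_positive dD).1).
rewrite wsE'; apply: IH.
- by move: ws_lt; rewrite wsE !size_cat /= addnS !ltnS => /ltnW.
- by rewrite all_cat pD qD.
- by move=> b /ws_pos; rewrite wsE'.
Qed.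

End SimpleSystem.

Lemma refl_group_chamber_eq1 w : W w -> same_chamber S (lam *m w) lam -> w = 1%:M.
Proof.
move=> Ww wlam; have [D simpleD] := exists_simple_system.
have [ws wsD wT] := refl_group_simple_word simpleD (refl_groupT rootS Ww).
suff ws1 : refl_word ws = 1%:M by rewrite -[w]trmxK wT ws1 trmx1.
apply: (refl_word_positive_eq1 simpleD wsD) => b [Sb b_pos]; rewrite -wT.
split; first exact: (refl_group_root rootS Ww Sb).2.
by rewrite dotv_mulmxl trmxK wlam.
Qed.

Lemma refl_group_chamber_inj w w' : W w -> W w' ->
  same_chamber S (lam *m w) (lam *m w') -> w = w'.
Proof.
move=> Ww Ww' /(same_chamber_mulmx rootS (refl_groupT rootS Ww')).
have ow' := refl_group_orthogonal rootS Ww'.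
rewrite -!mulmxA ow' mulmx1 => /refl_group_chamber_eq1.
move=> /(_ (gen_groupM Ww (refl_groupT rootS Ww'))) ww'1.
by rewrite -[w]mulmx1 -(orthogonal_mxC ow') mulmxA ww'1 mul1mx.
Qed.

Lemma refl_group_chamber_surj x : finite_set W -> regular S x ->
  exists2 w, W w & same_chamber S (lam *m w) x.
Proof.
move=> Wfin xreg; have [w Ww xw] := refl_group_to_chamber Wfin xreg.
exists w^T; first exact: refl_groupT.
have := same_chamber_mulmx rootS (refl_groupT rootS Ww) xw.
by rewrite -mulmxA (refl_group_orthogonal rootS Ww) mulmx1 => wx a Sa; rewrite wx.
Qed.

End Chambers.

(** * The fixed set of a special involution *)

Section OrthComplements.
Variables (R : realType) (n : nat).
Implicit Types (Rt Ea Eb : set 'rV[R]_n) (a p u v x y : 'rV[R]_n) (s : 'M[R]_n).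

Definition orth_complements Ea Eb :=
  [/\ is_subspace Ea, is_subspace Eb, (forall u v, Ea u -> Eb v -> dotv u v = 0)
    & forall a, exists a1 a2, [/\ Ea a1, Eb a2 & a = a1 + a2]].

Lemma orth_complementsC Ea Eb : orth_complements Ea Eb -> orth_complements Eb Ea.
Proof.
move=> [sEa sEb orth dec]; split=> // [u v Eb_u Ea_v|a].
  by rewrite dotvC; apply: orth.
by have [a1 [a2 [Ea1 Eb2 ->]]] := dec a; exists a2, a1; rewrite addrC.
Qed.

Lemma orth_complements_meet0 Ea Eb v : orth_complements Ea Eb -> Ea v -> Eb v -> v = 0.
Proof. by move=> [_ _ orth _] Ea_v Eb_v; apply/eqP; rewrite -dotvv_eq0 orth. Qed.

Lemma minus_eigsp_subspace s : is_subspace (minus_eigsp s).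
Proof.
split=> [|u v c]; rewrite /minus_eigsp /= ?mul0mx ?oppr0 // => us vs.
by rewrite mulmxDl -scalemxAl us vs scalerN opprD.
Qed.

Lemma plus_eigsp_subspace s : is_subspace (plus_eigsp s).
Proof.
split=> [|u v c]; rewrite /plus_eigsp /= ?mul0mx // => us vs.
by rewrite mulmxDl -scalemxAl us vs.
Qed.

Lemma eigsp_orth_complements s : orthogonal_mx s -> s *m s = 1%:M ->
  orth_complements (minus_eigsp s) (plus_eigsp s).
Proof.
move=> s_orth s_invol; split.
- exact: minus_eigsp_subspace.
- exact: plus_eigsp_subspace.
- move=> u v us vs; have := dotv_orthogonal u v s_orth.
  by rewrite [u *m s]us [v *m s]vs dotvNl; lra.
move=> a; exists (2^-1 *: (a - a *m s)), (2^-1 *: (a + a *m s)); split.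
- apply: subspaceZ (minus_eigsp_subspace s) _.
  by rewrite /minus_eigsp /= mulmxBl -mulmxA s_invol mulmx1 opprB.
- apply: subspaceZ (plus_eigsp_subspace s) _.
  by rewrite /plus_eigsp /= mulmxDl -mulmxA s_invol mulmx1 addrC.
- have half : 2^-1 + 2^-1 = 1 :> R by lra.
  by rewrite -scalerDr addrCA subrK scalerDr -scalerDl half scale1r.
Qed.

Lemma orth_proj_root_off_hyperplanes Rt Ea Eb a p x y :
  orth_complements Ea Eb -> Rt a -> is_orth_proj Ea a p ->
  proportional_to_root ((Rt `&` Ea) `|` (Rt `&` Eb)) p ->
  Ea y -> Eb x -> regular (Rt `&` Ea) y -> regular (Rt `&` Eb) x ->
  ~ (dotv a x = 0 /\ dotv a y = 0).
Proof.
move=> oE Ra [Ea_p p_perp] [c [b [Rb pE]]] Ey Ex yreg xreg [ax ay].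
have [_ sEb orth dec] := oE.
have ayp : dotv a y = dotv p y by apply/eqP; rewrite -subr_eq0 -dotvBl p_perp.
have p0 : p = 0.
  case: Rb => -[Rb Eb_b].
    have [c0|c0] := eqVneq c 0; first by rewrite pE c0 scale0r.
    move/eqP: ay; rewrite ayp pE dotvZl mulf_eq0 (negPf c0) /=.
    by rewrite (negPf (yreg b (conj Rb Eb_b))).
  by apply: orth_complements_meet0 oE Ea_p _; rewrite pE; apply: subspaceZ.
have [a1 [a2 [Ea1 Eb2 aE]]] := dec a.
have a10 : a1 = 0.
  apply/eqP; rewrite -dotvv_eq0; have := p_perp a1 Ea1.
  by rewrite p0 subr0 aE dotvDl (dotvC a2) (orth _ _ Ea1 Eb2) addr0 => ->.
have Eb_a : Eb a by rewrite aE a10 add0r.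
by have := xreg a (conj Ra Eb_a); rewrite ax eqxx.
Qed.

End OrthComplements.

Section FixedSet.
Variables (R : realType) (n : nat) (Rt : set 'rV[R]_n) (G : set 'M[R]_n).
Variable s : 'M[R]_n.
Hypothesis s_orth : orthogonal_mx s.
Hypothesis s_special : special_involution Rt G s.

Local Notation V1 := (minus_eigsp s).
Local Notation V2 := (plus_eigsp s).

Lemma fixed_setP z : fixed_set Rt s z <->
  [/\ V2 z.1, V1 z.2, regular (Rt `&` V2) z.1 & regular (Rt `&` V1) z.2].
Proof.
have [_ s_invol special] := s_special.
have oV := eigsp_orth_complements s_orth s_invol.
have [_ _ orth _] := oV; case: z => x y; split.
- move=> [/= off [xs ys]]; have V1y : V1 y by rewrite /minus_eigsp /= -{2}ys opprK.
  split=> // a [Ra Va]; apply/eqP => a0; apply: (off a Ra); split => //=.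
    by rewrite (dotvC a) orth.
  by rewrite orth.
move=> [/= V2x V1y xreg yreg]; split=> /=; last by rewrite V2x V1y opprK.
move=> a Ra; have [[p [pp pr]]|[p [pp pr]]] := special a Ra.
  exact: orth_proj_root_off_hyperplanes oV Ra pp pr V1y V2x yreg xreg.
move=> [ax ay].
by apply: orth_proj_root_off_hyperplanes (orth_complementsC oV) Ra pp _ V2x V1y xreg yreg _;
  rewrite 1?setUC.
Qed.

End FixedSet.

(** * Components of the fixed set *)

Lemma open_bigcap_finite (T : topologicalType) (I : eqType) (D : set I)
    (f : I -> set T) :
  finite_set D -> (forall i, D i -> open (f i)) -> open (\bigcap_(i in D) f i).
Proof.
move=> /finite_seqP[s ->]; elim: s => [|a s IH] fo.
  by rewrite set_nil bigcap_set0; apply: openT.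
have -> : [set` a :: s] = a |` [set` s].
  apply/seteqP; split=> x /=; rewrite inE; first by move=> /predU1P.
  by move=> [->|->]; rewrite ?eqxx ?orbT.
rewrite bigcap_setU1; apply: openI; first by apply: fo; rewrite /= inE eqxx.
by apply: IH => i si; apply: fo; rewrite /= inE si orbT.
Qed.

Lemma open_gt0_continuous (R : realType) (T : topologicalType) (f : T -> R) :
  continuous f -> open [set x | 0 < f x].
Proof.
move=> f_cont; apply: (@open_comp _ _ f [set r | 0 < r]); last exact: open_gt.
by move=> x _; apply: f_cont.
Qed.

Lemma closed_ge0_continuous (R : realType) (T : topologicalType) (f : T -> R) :
  continuous f -> closed [set x | 0 <= f x].
Proof.
move=> f_cont; apply: (@preimage_closed _ _ f [set r | 0 <= r]); last exact: closed_ge.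
by move=> x _; apply: f_cont.
Qed.

Lemma connected_component_clopen (T : topologicalType) (F B O C : set T) z :
  B z -> connected B -> open O -> closed C -> B = F `&` O -> B = F `&` C ->
  connected_component F z = B.
Proof.
move=> Bz Bconn Oopen Cclosed BO BC.
have BF : B `<=` F by rewrite BO; apply: subIsetl.
apply/seteqP; split; last exact: connected_component_max.
set K := connected_component F z; have KF : K `<=` F by apply: connected_component_sub.
have KB : K `&` B !=set0 by exists z; split=> //; apply: connected_component_refl; apply: BF.
have KO : K `&` B = K `&` O by rewrite BO setIA (setIidl KF).
have KC : K `&` B = K `&` C by rewrite BC setIA (setIidl KF).
have := @component_connected _ F z (K `&` B) KB (ex_intro2 _ _ O Oopen KO)
  (ex_intro2 _ _ C Cclosed KC).
by move=> KBK x Kx; have [] : (K `&` B) x by rewrite KBK.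
Qed.

Section Convex.
Variables (R : realType) (V : normedModType R).
Implicit Types (K : set V) (z : V).

Definition is_convex K :=
  forall x y t, K x -> K y -> 0 <= t <= 1 -> K ((1 - t) *: x + t *: y).

Lemma segment_continuous z : continuous (fun p : R * V => (1 - p.1) *: p.2 + p.1 *: z).
Proof.
move=> p; apply: (@continuousD _ _ _ (fun p : R * V => (1 - p.1) *: p.2) (fun p => p.1 *: z)).
  apply: (@continuousZ R V _ (fun p : R * V => 1 - p.1) snd); last exact: cvg_snd.
  by apply: (@continuousB R R^o _ (fun=> 1) fst); [apply: cst_continuous | apply: cvg_fst].
by apply: (@continuousZ _ _ _ fst); [apply: cvg_fst | apply: cst_continuous].
Qed.

Lemma convex_connected K : is_convex K -> connected K.
Proof.
move=> Kconv; have [->|/set0P[z Kz]] := eqVneq K set0; first exact: connected0.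
have -> : K = \bigcup_(x in K) ((fun t => (1 - t) *: x + t *: z) @` `[0, 1]).
  apply/seteqP; split=> [x Kx|_ [x Kx [t t01 <-]]].
    by exists x => //; exists 0; rewrite /= ?in_itv /= ?lexx ?ler01 // subr0 scale1r scale0r addr0.
  by apply: Kconv; rewrite // -in_itv.
apply: bigcup_connected => [|x Kx].
  by exists z => x Kx; exists 1; rewrite /= ?in_itv /= ?lexx ?ler01 // subrr scale0r scale1r add0r.
apply: connected_continuous_connected; first exact: segment_connected.
apply: continuous_subspaceT => t.
have -> : (fun t => (1 - t) *: x + t *: z) = (fun t => x + t *: (z - x)).
  by apply: funext => u; rewrite scalerBl scale1r scalerBr addrA addrAC.
apply: (@continuousD R V R (fun=> x) (fun t : R => t *: (z - x))).
  exact: cst_continuous.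
by apply: (@continuousZ R V R id); [apply: cvg_id | apply: cst_continuous].
Qed.

Lemma convex_contractible K : K !=set0 -> is_convex K -> contractible R K.
Proof.
move=> [z Kz] Kconv; split; first by exists z.
exists z, (fun p : R * V => (1 - p.1) *: p.2 + p.1 *: z); split.
- by apply: continuous_subspaceT; apply: segment_continuous.
- by move=> x Kx; rewrite /= subr0 subrr scale1r !scale0r addr0 add0r scale1r.
- by move=> t x t01 Kx; apply: Kconv.
Qed.

End Convex.

Lemma dotv_continuous (R : realType) (n : nat) (a : 'rV[R]_n) : continuous (dotv a).
Proof.
have -> : dotv a = fun v => \sum_(i <- index_enum 'I_n | true) a 0 i * v 0 i.
  by apply: funext => v; rewrite dotvE.
apply: (@continuous_big _ _ +%R 0 xpredT (@add_continuous _)) => i _ v.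
apply: (@continuousM _ _ (fun=> a 0 i) (fun v : 'rV[R]_n => v 0 i)).
  exact: cst_continuous.
exact: coord_continuous.
Qed.

Section Components.
Variables (R : realType) (n : nat) (Rt : set 'rV[R]_n) (s : 'M[R]_n).
Hypothesis rootRt : root_system Rt.
Hypothesis s_special : special_involution Rt (gen_group (refl_mx @` Rt)) s.

Local Notation V1 := (minus_eigsp s).
Local Notation V2 := (plus_eigsp s).
Local Notation R1 := (Rt `&` V1).
Local Notation R2 := (Rt `&` V2).
Local Notation F := (fixed_set Rt s).
Local Notation T := ('rV[R]_n * 'rV[R]_n)%type.

Let s_orth : orthogonal_mx s.
Proof. by case: s_special => /(refl_group_orthogonal rootRt). Qed.

Let fixedP := fixed_setP s_orth s_special.

Lemma fixed_set_regular z : F z -> regular R2 z.1 /\ regular R1 z.2.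
Proof. by move=> /fixedP[]. Qed.

Definition chamber_cell (z : T) : set T :=
  [set y | F y /\ same_chamber R2 y.1 z.1 /\ same_chamber R1 y.2 z.2].

Lemma chamber_cell_self z : F z -> chamber_cell z z.
Proof. by []. Qed.

Lemma chamber_cell_eq z y : chamber_cell z y -> chamber_cell y = chamber_cell z.
Proof.
move=> [_ [y2 y1]]; apply/seteqP; split=> x [Fx [x2 x1]]; split=> //.
  by split=> a Ra; [rewrite x2 ?y2 | rewrite x1 ?y1].
by split=> a Ra; [rewrite x2 -?y2 | rewrite x1 -?y1].
Qed.

Lemma chamber_cell_convex z : is_convex (chamber_cell z).
Proof.
move=> x y t [Fx [x2 x1]] [Fy [y2 y1]] t01.
have [V2x V1x x2reg x1reg] := (fixedP x).1 Fx.
have [V2y V1y y2reg y1reg] := (fixedP y).1 Fy.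
have comb_sign (S : set 'rV[R]_n) (pr : T -> 'rV[R]_n) a :
    regular S (pr x) -> regular S (pr y) -> same_chamber S (pr x) (pr y) -> S a ->
    dotv a ((1 - t) *: pr x + t *: pr y) != 0 /\
    (0 < dotv a ((1 - t) *: pr x + t *: pr y)) = (0 < dotv a (pr x)).
  move=> xreg yreg xy Sa; rewrite dotvDr !dotvZr.
  exact: convex_comb_sign t01 (xreg a Sa) (yreg a Sa) (xy a Sa).
have xy2 : same_chamber R2 x.1 y.1 by move=> a Ra; rewrite x2 ?y2.
have xy1 : same_chamber R1 x.2 y.2 by move=> a Ra; rewrite x1 ?y1.
split; last first.
  split=> a Ra.
    by rewrite (comb_sign _ fst a x2reg y2reg xy2 Ra).2 x2.
  by rewrite (comb_sign _ snd a x1reg y1reg xy1 Ra).2 x1.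
apply/fixedP; split=> /=.
- exact: subspace_comb (plus_eigsp_subspace s) V2x V2y.
- exact: subspace_comb (minus_eigsp_subspace s) V1x V1y.
- by move=> a Ra; apply: (comb_sign _ fst a x2reg y2reg xy2 Ra).1.
- by move=> a Ra; apply: (comb_sign _ snd a x1reg y1reg xy1 Ra).1.
Qed.

(* With [P := 0 < _] and [P := 0 <= _] this exhibits the cell as open and as
   closed in [F]. *)
Lemma chamber_cell_sign_set z (P : R -> Prop) : F z ->
  (forall p q, p != 0 -> q != 0 -> P (p * q) <-> (0 < p) = (0 < q)) ->
  chamber_cell z = F `&`
    (\bigcap_(a in R2) [set y : T | P (dotv a z.1 * dotv a y.1)] `&`
     \bigcap_(a in R1) [set y : T | P (dotv a z.2 * dotv a y.2)]).
Proof.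
move=> Fz PE; have [z2reg z1reg] := fixed_set_regular Fz.
apply/seteqP; split=> y [Fy]; have [y2reg y1reg] := fixed_set_regular Fy.
  move=> [y2 y1]; split=> //; split=> a Ra; apply/PE;
    by rewrite ?y2 ?y1 ?z2reg ?z1reg ?y2reg ?y1reg.
move=> [y2P y1P]; split=> //; split=> a Ra.
  exact/esym/(PE _ _ (z2reg a Ra) (y2reg a Ra))/y2P.
exact/esym/(PE _ _ (z1reg a Ra) (y1reg a Ra))/y1P.
Qed.

Lemma chamber_cell_component z : F z -> connected_component F z = chamber_cell z.
Proof.
move=> Fz; have [Rfin _ _ _] := rootRt.
have sign_cont a c (pr : T -> 'rV[R]_n) :
    continuous pr -> continuous (fun y => c * dotv a (pr y)).
  move=> pr_cont y; apply: (@continuousM _ _ (fun=> c) (fun y => dotv a (pr y))).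
    exact: cst_continuous.
  exact: (continuous_comp (pr_cont y) (@dotv_continuous _ _ a (pr y))).
have fst_cont : continuous (fst : T -> 'rV[R]_n) by move=> ?; apply: cvg_fst.
have snd_cont : continuous (snd : T -> 'rV[R]_n) by move=> ?; apply: cvg_snd.
have cellO := chamber_cell_sign_set (P := fun r => 0 < r) Fz.
have cellC := chamber_cell_sign_set (P := fun r => 0 <= r) Fz.
apply: connected_component_clopen (chamber_cell_self Fz) _ _ _ (cellO _) (cellC _).
- exact/convex_connected/chamber_cell_convex.
- by apply: openI; apply: open_bigcap_finite (finite_setIl _ Rfin) _ => a _;
    apply: open_gt0_continuous; apply: sign_cont.
- by apply: closedI; apply: closed_bigI => a _;
    apply: closed_ge0_continuous; apply: sign_cont.
- by move=> p q p0 q0; rewrite mulr_gt0_eq_sign //; split=> /eqP.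
- by move=> p q p0 q0; rewrite mulr_ge0_eq_sign //; split=> /eqP.
Qed.

Lemma fixed_set_component_contractible C : components F C -> contractible R C.
Proof.
move=> [z Fz ->]; rewrite chamber_cell_component //.
by apply: convex_contractible; [exists z | apply: chamber_cell_convex].
Qed.

Local Notation W1 := (gen_group (refl_mx @` R1)).
Local Notation W2 := (gen_group (refl_mx @` R2)).

Let rootR1 : root_system R1 := root_systemI rootRt (minus_eigsp_subspace s).
Let rootR2 : root_system R2 := root_systemI rootRt (plus_eigsp_subspace s).

Section ChamberCells.
Variables l1 l2 : 'rV[R]_n.
Hypotheses (V1l1 : V1 l1) (V2l2 : V2 l2).
Hypotheses (l1reg : regular R1 l1) (l2reg : regular R2 l2).

Lemma chamber_point_in_fixed_set g1 g2 : W1 g1 -> W2 g2 -> F (l2 *m g2, l1 *m g1).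
Proof.
move=> Wg1 Wg2; apply/fixedP; split=> /=.
- exact: (refl_group_subspace rootR2 (plus_eigsp_subspace s) (@subIsetr _ _ _) Wg2 V2l2).
- exact: (refl_group_subspace rootR1 (minus_eigsp_subspace s) (@subIsetr _ _ _) Wg1 V1l1).
- exact: (regular_mulmx rootR2 Wg2 l2reg).
- exact: (regular_mulmx rootR1 Wg1 l1reg).
Qed.

Hypothesis Wfin : finite_set (gen_group (refl_mx @` Rt)).

Lemma chamber_cells_bij : set_bij (W1 `*` W2) (components F)
  (fun g => chamber_cell (l2 *m g.2, l1 *m g.1)).
Proof.
have Wi_fin E : finite_set (gen_group (refl_mx @` (Rt `&` E))).
  by apply: sub_finite_set Wfin; apply: gen_groupS; apply: image_subset; apply: subIsetl.
split.
- move=> [g1 g2] [/= Wg1 Wg2]; exists (l2 *m g2, l1 *m g1); first exact: chamber_point_in_fixed_set.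
  by rewrite chamber_cell_component //; apply: chamber_point_in_fixed_set.
- move=> [g1 g2] [g1' g2']; rewrite !in_setE => -[/= Wg1 Wg2] [/= Wg1' Wg2'] /= cellE.
  have [_ [/= c2 c1]] : chamber_cell (l2 *m g2, l1 *m g1) (l2 *m g2', l1 *m g1').
    by rewrite cellE; apply/chamber_cell_self/chamber_point_in_fixed_set.
  by rewrite (refl_group_chamber_inj rootR2 l2reg Wg2' Wg2 c2)
    (refl_group_chamber_inj rootR1 l1reg Wg1' Wg1 c1).
- move=> _ [z Fz ->]; rewrite chamber_cell_component //.
  have [_ _ z2reg z1reg] := (fixedP z).1 Fz.
  have [g2 Wg2 c2] := refl_group_chamber_surj rootR2 l2reg (Wi_fin _) z2reg.
  have [g1 Wg1 c1] := refl_group_chamber_surj rootR1 l1reg (Wi_fin _) z1reg.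
  exists (g1, g2) => //=; apply: chamber_cell_eq.
  by split; [apply: chamber_point_in_fixed_set | split].
Qed.

End ChamberCells.

Lemma fixed_set_components_card : finite_set (gen_group (refl_mx @` Rt)) ->
  (components F #= W1 `*` W2)%card.
Proof.
move=> Wfin; have [[R1fin _ _ _] [R2fin _ _ _]] := (rootR1, rootR2).
have [l1 V1l1 l1reg] := exists_regular R1fin (root_neq0 rootR1) (@subIsetr _ _ _)
  (minus_eigsp_subspace s).
have [l2 V2l2 l2reg] := exists_regular R2fin (root_neq0 rootR2) (@subIsetr _ _ _)
  (plus_eigsp_subspace s).
rewrite card_eq_sym; apply/card_set_bijP; eexists.
exact: chamber_cells_bij V1l1 V2l2 l1reg l2reg Wfin.
Qed.

End Components.

Theorem proposition8 (R : realType) (n : nat) (Rt : set 'rV[R]_n)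
    (G : set 'M[R]_n) (s : 'M[R]_n) :
  root_system Rt ->
  G = gen_group (refl_mx @` Rt) ->
  finite_set G ->
  special_involution Rt G s ->
  let G1 := gen_group (refl_mx @` (Rt `&` minus_eigsp s)) in
  let G2 := gen_group (refl_mx @` (Rt `&` plus_eigsp s)) in
  let F := fixed_set Rt s in
  (forall C, components F C -> contractible R C) /\
  (components F #= (G1 `*` G2))%card.
Proof.
move=> rootRt -> Wfin s_special G1 G2 F; split.
  exact: fixed_set_component_contractible rootRt s_special.
exact: fixed_set_components_card rootRt s_special Wfin.
Qed.
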